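(* Let $\theta\in(0,\pi)$ and let $C$ be the domain $C=\mathbb{C}\setminus\bigcup_{n\in\mathbb{Z}}\{n+iy:|y|\ge b_n\}$, where $b_0=1$ and $b_n=|n|\tan(\theta/2)$ for $n\in\mathbb{Z}\setminus\{0\}$. For $t>1$, let $J_t$ be the connected component of $C\cap\{|z|=t\}$ containing the point $t$, and define $\Theta(t)$ by $t\Theta(t)=l(J_t)$, where $l(J_t)$ is the length of the arc $J_t$. Then $\lim_{t\to+\infty}\Theta(t)=\theta$. *)

From HB Require Import structures.
From mathcomp Require Import all_boot all_order all_algebra.
From mathcomp Require Import all_classical all_reals all_analysis.
Set Implicit Arguments. Unset Strict Implicit. Unset Printing Implicit Defensive.
Import Order.TTheory GRing.Theory Num.Theory.
Import numFieldNormedType.Exports.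
Local Open Scope classical_set_scope.
Local Open Scope ring_scope.

Section Defs.
Variable R : realType.

Definition slit_height (theta : R) (n : int) : R :=
  if n == 0 then 1 else (`|n|%:~R) * tan (theta / 2).

Definition slit_domain (theta : R) : set (R * R) :=
  [set p | forall n : int, ~ (p.1 = n%:~R /\ slit_height theta n <= `|p.2|)].

Definition circle (t : R) : set (R * R) :=
  [set p | p.1 ^+ 2 + p.2 ^+ 2 = t ^+ 2].

Definition J (theta t : R) : set (R * R) :=
  connected_component (slit_domain theta `&` circle t) (t, 0).

Definition arc_length (t : R) (A : set (R * R)) : \bar R :=
  let angles := [set phi : R | (- pi < phi <= pi)%R /\
                                A (t * cos phi, t * sin phi)%R] in
  (t%:E * (@lebesgue_measure R) angles)%E.

Definition Theta (theta t : R) : \bar R :=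
  ((t^-1)%:E * arc_length t (J theta t))%E.

End Defs.

From HB Require Import structures.
From mathcomp Require Import all_boot all_order all_algebra.
From mathcomp Require Import all_classical all_reals all_analysis.
From mathcomp Require Import lra.
Import Order.TTheory GRing.Theory Num.Theory.
Import numFieldNormedType.Exports.
Local Open Scope classical_set_scope.
Local Open Scope ring_scope.

(* For |psi| < theta/2 the point t e^{i psi} lies strictly between the two
   slits through the lines of slope +-tan(theta/2), so the whole arc of angular
   width theta around t is in J_t.  Conversely, with n = floor(t cos(theta/2)),
   every point of the circle on the line Re z = n lies on the slit there, so
   the connected set J_t stays in Re z > n > t cos(theta/2) - 1, which for
   large t confines it to angles |phi| < theta/2 + d. *)

Lemma connected_component_sub_gt {T : topologicalType} {R : realType}
    {f : T -> R} {A : set T} {x : T} {n : R} :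
  continuous f -> (forall p, A p -> f p != n) -> n < f x ->
  connected_component A x `<=` [set p | n < f p].
Proof.
move=> fC Afn nfx y [C [Cx CA cC] Cy].
suff CE : C `&` [set p | n < f p] = C by move: Cy; rewrite -CE => -[].
apply: cC; first by exists x.
- exists [set p | n < f p] => //.
  apply: (@open_comp _ _ f [set r | n < r]); last exact: open_gt.
  by move=> p _; apply: fC.
- exists [set p | n <= f p].
    apply: (@preimage_closed _ _ f [set r | n <= r]); last exact: closed_ge.
    by move=> p _; apply: fC.
  apply/seteqP; split=> p [Cp /= np]; split => //; first exact: ltW.
  by rewrite lt_neqAle np andbT eq_sym Afn //; apply: CA.
Qed.

Section Slits.
Set Implicit Arguments. Unset Strict Implicit.
Variable R : realType.
Implicit Types (theta t phi psi d : R).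

Definition polar t phi : R * R := (t * cos phi, t * sin phi).

Lemma continuous_polar t : continuous (polar t).
Proof.
move=> phi.
have tcos : t * cos x @[x --> phi] --> t * cos phi.
  by apply: cvgM; [exact: cvg_cst | exact: continuous_cos].
have tsin : t * sin x @[x --> phi] --> t * sin phi.
  by apply: cvgM; [exact: cvg_cst | exact: continuous_sin].
exact: cvg_pair tcos tsin.
Qed.

Lemma connected_polar_itv t (i : interval R) :
  connected (polar t @` [set` i]).
Proof.
apply: connected_continuous_connected.
  exact/connected_intervalP/interval_is_interval.
exact/continuous_subspaceT/continuous_polar.
Qed.

Lemma circle_polar t phi : circle t (polar t phi).
Proof. by rewrite /circle /= !exprMn -mulrDr cos2Dsin2 mulr1. Qed.

Lemma ltr_norm_tan h psi : 0 < h < pi / 2 -> - h < psi < h ->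
  `|tan psi| < tan h.
Proof.
move=> /andP[h0 hpi] /andP[hl hr]; have pi0 := @pi_gt0 R.
rewrite ltr_norml -tanN !ltr_tan; rewrite ?in_itv /=;
  by try (apply/andP; split); lra.
Qed.

Lemma polar_slit_domain theta t psi :
  0 < theta < pi -> 0 < t -> - (theta / 2) < psi < theta / 2 ->
  slit_domain theta (polar t psi).
Proof.
move=> /andP[th0 thpi] t0 hpsi n /= [xn hn]; have pi0 := @pi_gt0 R.
have cpos : 0 < cos psi.
  by apply: cos_gt0_pihalf; move: hpsi => /andP[? ?]; apply/andP; split; lra.
have xpos : 0 < t * cos psi by apply: mulr_gt0.
have n0 : n != 0 by apply: contraTneq xpos => n0; rewrite xn n0 ltxx.
have tan_lt : `|tan psi| < tan (theta / 2).
  by apply: ltr_norm_tan => //; apply/andP; split; lra.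
have y_eq : t * sin psi = t * cos psi * tan psi.
  by rewrite /tan -mulrA [cos psi * _]mulrC divfK ?gt_eqF.
move: hn; rewrite /slit_height (negbTE n0) intr_norm -xn y_eq.
by rewrite [`|_ * tan psi|]normrM gtr0_norm // ler_pM2l // leNgt tan_lt.
Qed.

(* |y|^2 = t^2 - n^2 >= n^2 / cos^2(theta/2) - n^2 = n^2 tan^2(theta/2). *)
Lemma circle_on_slit theta t (n : int) p :
  0 < theta < pi -> 0 < n -> n%:~R <= t * cos (theta / 2) ->
  circle t p -> p.1 = n%:~R -> ~ slit_domain theta p.
Proof.
move=> /andP[th0 thpi] n0 nle Cp xn Sp; apply: (Sp n); split => //.
have pi0 := @pi_gt0 R.
set c := cos (theta / 2); set s := sin (theta / 2).
have cpos : 0 < c by apply: cos_gt0_pihalf; apply/andP; split; lra.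
have spos : 0 < s by apply: sin_gt0_pihalf; apply/andP; split; lra.
have N0 : (0 : R) <= n%:~R by rewrite ler0z ltW.
have sc : s ^+ 2 = 1 - c ^+ 2 by rewrite -(cos2Dsin2 (theta / 2)) addrC addKr.
have y2 : `|p.2| ^+ 2 = t ^+ 2 - n%:~R ^+ 2.
  by rewrite real_normK ?num_real // -xn -Cp addrC addKr.
have n2 : n%:~R ^+ 2 <= (t * c) ^+ 2 by rewrite ler_sqr ?nnegrE // (le_trans N0).
have sq : (n%:~R * s) ^+ 2 <= (`|p.2| * c) ^+ 2.
  by rewrite !exprMn y2 sc; move: n2; rewrite exprMn; nra.
rewrite /slit_height gt_eqF // intr_norm ger0_norm // /tan -/c -/s mulrA.
by rewrite ler_pdivrMr // -ler_sqr // nnegrE mulr_ge0 // ltW.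
Qed.

Definition angles theta t : set R :=
  [set phi | - pi < phi <= pi /\ J theta t (polar t phi)].

Lemma Theta_angles theta t : 0 < t ->
  Theta theta t = lebesgue_measure (angles theta t).
Proof.
by move=> t0; rewrite /Theta /arc_length muleA -EFinM mulVf ?gt_eqF ?mul1e.
Qed.

Lemma itv_sub_angles theta t : 0 < theta < pi -> 0 < t ->
  `]- (theta / 2), theta / 2[ `<=` angles theta t.
Proof.
move=> th t0; have pi0 := @pi_gt0 R; move: (th) => /andP[th0 thpi].
pose arc := polar t @` [set` `]- (theta / 2), theta / 2[].
have arc0 : arc (t, 0).
  exists 0; first by rewrite /= in_itv /=; apply/andP; split; lra.
  by rewrite /polar cos0 sin0 mulr1 mulr0.
have arc_sub : arc `<=` slit_domain theta `&` circle t.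
  move=> _ [psi + <-]; rewrite /= in_itv /= => hpsi.
  by split; [exact: polar_slit_domain | exact: circle_polar].
have arcJ := connected_component_max arc0 arc_sub (@connected_polar_itv t _).
move=> phi phi_itv; split; last by apply: arcJ; exists phi.
by move: phi_itv; rewrite /= in_itv /= => /andP[? ?]; apply/andP; split; lra.
Qed.

Lemma angles_sub_itv theta t d :
  0 < theta < pi -> 0 < d -> theta / 2 + d <= pi ->
  1 <= t * cos (theta / 2) ->
  1 <= t * (cos (theta / 2) - cos (theta / 2 + d)) ->
  angles theta t `<=` `]- (theta / 2 + d), theta / 2 + d[.
Proof.
move=> th d0 hd tc1 tcd phi [/andP[phil phir] Jphi].
have pi0 := @pi_gt0 R; move: (th) => /andP[th0 thpi].
set c := cos (theta / 2) in tc1 tcd.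
set n := Num.floor (t * c).
have c0 : 0 < c by apply: cos_gt0_pihalf; apply/andP; split; lra.
have t0 : 0 < t by rewrite -(pmulr_lgt0 _ c0) (lt_le_trans ltr01).
have n0 : 0 < n by rewrite floor_gt0.
have nle : n%:~R <= t * c := floor_le _.
have ngt : t * c - 1 < n%:~R.
  by move: (floor_itv (t * c)); rewrite intrD -/n => /andP[_]; lra.
have nt : n%:~R < (t, 0 : R).1.
  by rewrite /= (le_lt_trans nle) // gtr_pMr // -[X in _ < X](cos0 R)
    ltr_cos ?in_itv /=; try (apply/andP; split); lra.
have fst_cont : continuous (@fst R R) by move=> ?; exact: cvg_fst.
have avoid_n p : (slit_domain theta `&` circle t) p -> p.1 != n%:~R.
  by move=> [Sp Cp]; apply/eqP => /(circle_on_slit th n0 nle Cp); apply.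
have /= nx := connected_component_sub_gt fst_cont avoid_n nt _ Jphi.
rewrite in_itv /= -ltr_norml ltNge; apply/negP => phi_ge.
suff : cos phi <= cos (theta / 2 + d).
  by rewrite -(ler_pM2l t0); lra.
rewrite -cos_norm leNgt ltr_cos ?in_itv /= -?leNgt //;
  by apply/andP; split; try lra; rewrite ler_norml; apply/andP; split; lra.
Qed.

(* [angles theta t] is not known to be measurable; on arbitrary sets
   [lebesgue_measure] is the outer measure, which is monotone. *)
Lemma le_lebesgue_measure (A B : set R) :
  A `<=` B -> (lebesgue_measure A <= lebesgue_measure B)%E.
Proof.
move=> AB; rewrite /lebesgue_measure /lebesgue_stieltjes_measure.
exact: le_mu_ext.
Qed.

Lemma Theta_near_itv theta d : 0 < theta < pi -> 0 < d -> theta / 2 + d <= pi ->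
  \forall t \near +oo, (theta%:E <= Theta theta t <= (theta + 2 * d)%:E)%E.
Proof.
move=> th d0 hd; have pi0 := @pi_gt0 R; move: (th) => /andP[th0 thpi].
set c := cos (theta / 2); set k := c - cos (theta / 2 + d).
have c0 : 0 < c by apply: cos_gt0_pihalf; apply/andP; split; lra.
have k0 : 0 < k.
  by rewrite subr_gt0 ltr_cos ?in_itv /=; try (apply/andP; split); lra.
near=> t.
have tc1 : 1 <= t * c.
  by rewrite -ler_pdivrMr // mul1r; near: t; apply: nbhs_pinfty_ge; exact: num_real.
have tk1 : 1 <= t * k.
  by rewrite -ler_pdivrMr // mul1r; near: t; apply: nbhs_pinfty_ge; exact: num_real.
have t0 : 0 < t by rewrite -(pmulr_lgt0 _ c0) (lt_le_trans ltr01).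
rewrite Theta_angles //; apply/andP; split.
- apply: le_trans (le_lebesgue_measure (itv_sub_angles th t0)).
  by rewrite lebesgue_measure_itv /= lte_fin ifT -?EFinB ?lee_fin; lra.
- apply: le_trans (le_lebesgue_measure (angles_sub_itv th d0 hd tc1 tk1)) _.
  by rewrite lebesgue_measure_itv /= lte_fin ifT -?EFinB ?lee_fin; lra.
Unshelve. all: by end_near.
Qed.

End Slits.

Theorem lemma3p2 (R : realType) (theta : R) (htheta : 0 < theta < pi) :
  Theta theta t @[t --> +oo%R] --> (theta%:E)%E.
Proof.
have pi0 := @pi_gt0 R; move: (htheta) => /andP[th0 thpi].
apply/fine_cvgP; split.
  have d0 : 0 < (pi - theta) / 2 by lra.
  apply: filterS (Theta_near_itv htheta d0 _); last lra.
  by move=> t; case: (Theta theta t) => //=; rewrite leye_eq andbF.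
apply/cvgrPdist_le => eps eps0.
pose d := Num.min (eps / 2) ((pi - theta) / 2).
have d0 : 0 < d by rewrite lt_min; apply/andP; split; lra.
have [d_eps d_pi] : d <= eps / 2 /\ d <= (pi - theta) / 2.
  by split; rewrite ge_min lexx ?orbT.
apply: filterS (Theta_near_itv htheta d0 _); last lra.
move=> t /=; case: (Theta theta t) => [r | | ] //=; last by rewrite leye_eq andbF.
by rewrite !lee_fin ler_norml => /andP[? ?]; apply/andP; split; lra.
Qed.
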